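(* Let $\bm{C}\in\mathbb{R}^{n\times m}$, let $\bm{a}\in\Delta_n$, $\bm{b}\in\Delta_m$, let $r\ge1$, and let $\bm{T}_k\in\mathbb{R}_+^{r\times r}$ be fixed. Define $$\mathcal{H}(\bm{Q},\bm{R},\bm{T},\bm{g}_Q,\bm{g}_R)=\langle\bm{C},\bm{Q}\,\mathrm{diag}(1/\bm{g}_Q)\,\bm{T}\,\mathrm{diag}(1/\bm{g}_R)\,\bm{R}^{\mathrm T}\rangle_F,$$ $$\mathcal{L}_{\mathrm{LC}}(\bm{Q},\bm{R},\bm{T})=\langle\bm{C},\bm{Q}\,\mathrm{diag}(1/\bm{Q}^{\mathrm T}\bm{1}_n)\,\bm{T}\,\mathrm{diag}(1/\bm{R}^{\mathrm T}\bm{1}_m)\,\bm{R}^{\mathrm T}\rangle_F.$$ Then $$\min_{\bm{g}_R\in\Delta_r,\ \bm{g}_Q\in\Delta_r,\ \bm{Q}\in\Pi_{\bm{a},\bm{g}_Q},\ \bm{R}\in\Pi_{\bm{b},\bm{g}_R}}\mathcal{H}(\bm{Q},\bm{R},\bm{T}_k,\bm{g}_Q,\bm{g}_R)=\min_{(\bm{Q},\bm{R},\bm{T}_k)\in\mathcal{C}_1}\mathcal{L}_{\mathrm{LC}}(\bm{Q},\bm{R},\bm{T}_k),$$ where $\mathcal{C}_1=\{(\bm{Q},\bm{R},\bm{T})\in\mathbb{R}_+^{n\times r}\times\mathbb{R}_+^{m\times r}\times\mathbb{R}_+^{r\times r}:\bm{Q}\bm{1}_r=\bm{a},\ \bm{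R}\bm{1}_r=\bm{b}\}$.
   Context: $\Delta_d$ denotes the probability simplex in $\mathbb{R}^d$. For nonnegative vectors $\bm{u}\in\mathbb{R}^n$, $\bm{v}\in\mathbb{R}^r$, $\Pi_{\bm{u},\bm{v}}=\{\bm{P}\in\mathbb{R}_+^{n\times r}:\bm{P}\bm{1}_r=\bm{u},\ \bm{P}^{\mathrm T}\bm{1}_n=\bm{v}\}$ (and analogously for $m\times r$ matrices). $\langle\cdot,\cdot\rangle_F$ is the Frobenius inner product, $\mathrm{diag}(\bm{v})$ the diagonal matrix with diagonal $\bm{v}$, and $1/\bm{v}$ entrywise reciprocal; both objectives are considered at points where the inner marginals have positive entries so that they are defined. *)

From HB Require Import structures.
From mathcomp Require Import all_boot all_order all_algebra.
Set Implicit Arguments. Unset Strict Implicit. Unset Printing Implicit Defensive.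
Import Order.TTheory GRing.Theory Num.Theory.
Local Open Scope ring_scope.

Section Defs.
Variable R : realFieldType.

Definition ones (k : nat) : 'cV[R]_k := const_mx 1.

Definition nonneg_mx (p q : nat) (A : 'M[R]_(p, q)) : Prop :=
  forall i j, 0 <= A i j.

Definition pos_vec (d : nat) (v : 'cV[R]_d) : Prop := forall i, 0 < v i 0.

Definition in_simplex (d : nat) (v : 'cV[R]_d) : Prop :=
  (forall i, 0 <= v i 0) /\ \sum_(i < d) v i 0 = 1.

Definition in_Pi (p q : nat) (u : 'cV[R]_p) (v : 'cV[R]_q) (P : 'M[R]_(p, q)) : Prop :=
  nonneg_mx P /\ P *m ones q = u /\ P^T *m ones p = v.

Definition frob (p q : nat) (A B : 'M[R]_(p, q)) : R :=
  \sum_(i < p) \sum_(j < q) A i j * B i j.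

Definition diag_inv (d : nat) (v : 'cV[R]_d) : 'M[R]_d :=
  diag_mx (map_mx (fun x => x^-1) v)^T.

Definition Hobj (n m r : nat) (C : 'M[R]_(n, m)) (Q : 'M[R]_(n, r))
  (Rm : 'M[R]_(m, r)) (T : 'M[R]_r) (gQ gR : 'cV[R]_r) : R :=
  frob C (Q *m diag_inv gQ *m T *m diag_inv gR *m Rm^T).

Definition LLC (n m r : nat) (C : 'M[R]_(n, m)) (Q : 'M[R]_(n, r))
  (Rm : 'M[R]_(m, r)) (T : 'M[R]_r) : R :=
  frob C (Q *m diag_inv (Q^T *m ones n) *m T *m diag_inv (Rm^T *m ones m) *m Rm^T).

Definition is_minimum (S : R -> Prop) (v : R) : Prop :=
  S v /\ forall w, S w -> v <= w.

End Defs.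

From HB Require Import structures.
From mathcomp Require Import all_boot all_order all_algebra.
Import Order.TTheory GRing.Theory Num.Theory.
Local Open Scope ring_scope.

(* The constraint Q \in Pi_{a,g_Q} forces g_Q = Q^T 1 (and likewise g_R = R^T 1), and
   with these marginals H is literally L_LC. Conversely, for Q >= 0 with Q 1 = a the
   column sums Q^T 1 are nonnegative with the same total mass as a, so they lie in the
   simplex and (Q, R, Q^T 1, R^T 1) is feasible for H. The two problems therefore have
   the same set of attainable values, hence the same minima. *)

Lemma is_minimum_ext (R : realFieldType) (S1 S2 : R -> Prop) (v : R) :
  (forall w, S1 w <-> S2 w) -> is_minimum S1 v <-> is_minimum S2 v.
Proof.
move=> S12; split=> -[Sv Smin]; split=> [|w Sw]; first exact/S12.
- by apply: Smin; apply/S12.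
- exact/S12.
- by apply: Smin; apply/S12.
Qed.

Section Marginals.
Variables (R : realFieldType) (p q : nat).
Implicit Type A : 'M[R]_(p, q).

Lemma row_sumsE A i : (A *m ones R q) i 0 = \sum_(j < q) A i j.
Proof. by rewrite mxE; apply: eq_bigr => j _; rewrite mxE mulr1. Qed.

Lemma col_sumsE A j : (A^T *m ones R p) j 0 = \sum_(i < p) A i j.
Proof. by rewrite mxE; apply: eq_bigr => i _; rewrite !mxE mulr1. Qed.

Lemma sum_col_sums A :
  \sum_(j < q) (A^T *m ones R p) j 0 = \sum_(i < p) (A *m ones R q) i 0.
Proof.
under eq_bigr => j _ do rewrite col_sumsE.
by rewrite exchange_big; apply: eq_bigr => i _; rewrite row_sumsE.
Qed.

Lemma col_sums_ge0 A : nonneg_mx A -> forall j, 0 <= (A^T *m ones R p) j 0.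
Proof. by move=> A_ge0 j; rewrite col_sumsE sumr_ge0. Qed.

Lemma col_sums_in_simplex A (u : 'cV[R]_p) :
  nonneg_mx A -> A *m ones R q = u -> in_simplex u -> in_simplex (A^T *m ones R p).
Proof.
move=> A_ge0 Au [_ u1]; split; first exact: col_sums_ge0.
by rewrite sum_col_sums Au.
Qed.

Lemma in_Pi_col_sums A (u : 'cV[R]_p) :
  nonneg_mx A -> A *m ones R q = u -> in_Pi u (A^T *m ones R p) A.
Proof. by []. Qed.

End Marginals.

Lemma Hobj_col_sums (R : realFieldType) (n m r : nat) (C : 'M[R]_(n, m))
  (Q : 'M[R]_(n, r)) (Rm : 'M[R]_(m, r)) (T : 'M[R]_r) :
  Hobj C Q Rm T (Q^T *m ones R n) (Rm^T *m ones R m) = LLC C Q Rm T.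
Proof. by []. Qed.

Theorem lemma1 (R : realFieldType) (n m r : nat) (C : 'M[R]_(n, m))
  (a : 'cV[R]_n) (b : 'cV[R]_m) (Tk : 'M[R]_r) :
  in_simplex a -> in_simplex b -> (1 <= r)%N -> nonneg_mx Tk ->
  forall v : R,
    is_minimum (fun w => exists (gR gQ : 'cV[R]_r) (Q : 'M[R]_(n, r)) (Rm : 'M[R]_(m, r)),
                  in_simplex gR /\ in_simplex gQ /\ pos_vec gQ /\ pos_vec gR /\
                  in_Pi a gQ Q /\ in_Pi b gR Rm /\ Hobj C Q Rm Tk gQ gR = w) v
    <->
    is_minimum (fun w => exists (Q : 'M[R]_(n, r)) (Rm : 'M[R]_(m, r)),
                  nonneg_mx Q /\ nonneg_mx Rm /\ nonneg_mx Tk /\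
                  Q *m ones R r = a /\ Rm *m ones R r = b /\
                  pos_vec (Q^T *m ones R n) /\ pos_vec (Rm^T *m ones R m) /\
                  LLC C Q Rm Tk = w) v.
Proof.
move=> a_simplex b_simplex _ Tk_ge0 v; apply: is_minimum_ext => w; split.
- move=> [gR [gQ [Q [Rm [_ [_ [gQ_gt0 [gR_gt0 [[Q_ge0 [Qa gQE]] [[Rm_ge0 [Rmb gRE]] <-]]]]]]]]]].
  subst gQ gR; exists Q, Rm; do 7 (split; first by []).
  exact: Hobj_col_sums.
- move=> [Q [Rm [Q_ge0 [Rm_ge0 [_ [Qa [Rmb [gQ_gt0 [gR_gt0 <-]]]]]]]]].
  exists (Rm^T *m ones R m), (Q^T *m ones R n), Q, Rm.
  split; first exact: col_sums_in_simplex Rmb b_simplex.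
  split; first exact: col_sums_in_simplex Qa a_simplex.
  split; first by [].
  split; first by [].
  split; first exact: in_Pi_col_sums.
  split; first exact: in_Pi_col_sums.
  exact: Hobj_col_sums.
Qed.
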